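(* Let $m,n$ be positive integers, let $\bm{D}_0\in\mathbb{R}^{m\times m}$ be invertible, let $\bm{X}_0\in\mathbb{R}^{m\times n}$, and let $\bm{Y}=\bm{D}_0\bm{X}_0$. Let $\Omega\subseteq[m]\times[n]$ be the support of $\bm{X}_0$, and for $i\in[m]$ let $\Omega_i\subseteq[n]$ be the support of the $i$-th row of $\bm{X}_0$, with complement $\Omega_i^c=[n]\setminus\Omega_i$. Consider the problem of finding $\bm{D}\in\mathbb{R}^{m\times m}$ and $\bm{X}\in\mathbb{R}^{m\times n}$ such that $$\bm{Y}=\bm{D}\bm{X}\quad\text{and}\quad \bm{X}_{i,j}=0\ \text{for all }(i,j)\notin\Omega.$$ Say that this problem has a unique solution if every solution is of the form $\bm{D}=\bm{D}_0\bm{S}$, $\bm{X}=\bm{S}^{-1}\bm{X}_0$ for some diagonal matrix $\bm{S}$ with nonzero diagonal entries. If the problem has a unique solution in this sense, then: (1) $n\ge n_0=m+\frac{|\Omega|}{m}-1$; (2) for all $i\in[m]$, $|\Omega_i^c|\ge m-1$; (3) for all $i\in[m]$ and all $i'\in[m]$ with $i'\ne i$, there exists $j\in[n]$ such that $(\bm{X}_0)_{i,j}=0$ and $(\bm{X}_0)_{i',j}\ne 0$.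
   Context: $[n]=\{1,\dots,n\}$. The support of a matrix or row vector is the set of indices of its nonzero entries. *)

From HB Require Import structures.
From mathcomp Require Import all_boot all_order all_algebra.
From mathcomp Require Import reals.
Set Implicit Arguments. Unset Strict Implicit. Unset Printing Implicit Defensive.
Import Order.TTheory GRing.Theory Num.Theory.
Local Open Scope ring_scope.

Definition supp_mx (R : realType) (m n : nat) (X0 : 'M[R]_(m, n)) : {set 'I_m * 'I_n} :=
  [set ij | X0 ij.1 ij.2 != 0].

Definition supp_row (R : realType) (m n : nat) (X0 : 'M[R]_(m, n)) (i : 'I_m) : {set 'I_n} :=
  [set j | row i X0 0 j != 0].

Definition is_solution (R : realType) (m n : nat) (Y : 'M[R]_(m, n)) (X0 : 'M[R]_(m, n))
  (D : 'M[R]_m) (X : 'M[R]_(m, n)) : Prop :=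
  Y = D *m X /\ (forall i j, (i, j) \notin supp_mx X0 -> X i j = 0).

Definition unique_solution (R : realType) (m n : nat) (D0 : 'M[R]_m) (X0 : 'M[R]_(m, n)) : Prop :=
  forall (D : 'M[R]_m) (X : 'M[R]_(m, n)), is_solution (D0 *m X0) X0 D X ->
    exists s : 'rV[R]_m, (forall i, s 0 i != 0) /\
      D = D0 *m diag_mx s /\ X = invmx (diag_mx s) *m X0.

From HB Require Import structures.
From mathcomp Require Import all_boot all_order all_algebra.
From mathcomp Require Import reals.
From mathcomp Require Import lra.
Import Order.TTheory GRing.Theory Num.Theory.
Local Open Scope ring_scope.

(* Uniqueness says that the only invertible T for which (D0 T^-1, T X0) is again
   a solution are the diagonal ones.  A rank-one update T = 1 + e_i v with v_i = 0
   is invertible, and T X0 differs from X0 only in row i, by v X0; so as soon as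
   v X0 vanishes off the support of row i, the update must be trivial.  Taking
   v = e_i' gives (3).  For (2), the 1 + |Omega_i^c| linear conditions on v must
   therefore cut out only v = 0 in R^m, so m <= 1 + |Omega_i^c|.  Summing (2) over
   the rows bounds |Omega| by m (n - m + 1), which is (1). *)

Lemma unitmx1D_mul {R : comUnitRingType} {n : nat} {u : 'cV[R]_n} {v : 'rV[R]_n} :
  v *m u = 0 -> 1%:M + u *m v \in unitmx.
Proof.
move=> vu; apply: (proj1 (@mulmx1_unit _ _ _ (1%:M - u *m v) _)).
by rewrite mulmxDl mul1mx mulmxBr mulmx1 mulmxA -(mulmxA u) vu mulmx0 mul0mx subr0 subrK.
Qed.

Lemma card_supp_mx {R : realType} {m n : nat} (X0 : 'M[R]_(m, n)) :
  #|supp_mx X0| = (\sum_i #|supp_row X0 i|)%N.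
Proof.
rewrite -sum1_card (eq_bigr (fun i => \sum_(j in supp_row X0 i) 1)%N) ?pair_big_dep.
  by apply: eq_bigl => -[i j]; rewrite !inE mxE.
by move=> i _; rewrite sum1_card.
Qed.

Lemma card_supp_mx_le {R : realType} {m n k : nat} {X0 : 'M[R]_(m, n)} :
  (forall i, k <= #|~: supp_row X0 i|)%N -> (#|supp_mx X0| + m * k <= m * n)%N.
Proof.
move=> zeros_ge.
have sum_const c : (\sum_(i < m) c = m * c)%N by rewrite sum_nat_const card_ord.
rewrite card_supp_mx -!sum_const -big_split; apply: leq_sum => i _.
by rewrite -[X in (_ <= X)%N](card_ord n) -(cardsC (supp_row X0 i)) leq_add2l.
Qed.

Section UniqueFactorization.

Context {R : realType} {m n : nat} {D0 : 'M[R]_m} {X0 : 'M[R]_(m, n)}.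
Hypotheses (D0_unit : D0 \in unitmx) (uniq_D0X0 : unique_solution D0 X0).

Lemma support_preserving_unitmx_is_diag {T : 'M[R]_m} : T \in unitmx ->
  (forall a j, X0 a j = 0 -> (T *m X0) a j = 0) -> is_diag_mx T.
Proof.
move=> T_unit T_supp; apply/is_diag_mxP => a k; rewrite val_eqE => neq_ak.
have [|s [s_neq0 [D_eq _]]] := uniq_D0X0 (D0 *m invmx T) (T *m X0).
  split=> [|b j]; first by rewrite mulmxA mulmxKV.
  by rewrite inE negbK => /eqP /T_supp.
have invT_diag : invmx T = diag_mx s by rewrite -(mulKmx D0_unit (invmx T)) D_eq mulKmx.
have : (T *m diag_mx s) a k = 0 by rewrite -invT_diag mulmxV // mxE (negbTE neq_ak).
by rewrite mul_mx_diag mxE => /eqP; rewrite mulf_eq0 (negbTE (s_neq0 k)) orbF => /eqP.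
Qed.

Lemma row_update_eq0 (i : 'I_m) (v : 'rV[R]_m) : v 0 i = 0 ->
  (forall j, j \notin supp_row X0 i -> (v *m X0) 0 j = 0) -> v = 0.
Proof.
move=> vi0 vX_supp; pose u : 'cV[R]_m := delta_mx i 0.
have uE a (w : 'rV[R]_n) j : (u *m w) a j = (a == i)%:R * w 0 j.
  by rewrite mxE big_ord1 !mxE eqxx andbT.
have vu0 : v *m u = 0 by rewrite -colE; apply/matrixP => a b; rewrite !ord1 !mxE.
have T_supp (a : 'I_m) (j : 'I_n) :
    X0 a j = 0 -> ((1%:M + u *m v) *m X0) a j = 0.
  move=> Xaj0; rewrite mulmxDl mul1mx -mulmxA mxE Xaj0 add0r uE.
  case: eqP => [a_i | _]; last by rewrite mul0r.
  by rewrite vX_supp ?mulr0 // inE mxE -a_i Xaj0 eqxx.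
apply/rowP => k; rewrite mxE; have [<- //|neq_ik] := eqVneq i k.
have /is_diag_mxP/(_ i k neq_ik) :=
  support_preserving_unitmx_is_diag (unitmx1D_mul vu0) T_supp.
by rewrite !mxE (negbTE neq_ik) add0r big_ord1 !mxE !eqxx mul1r.
Qed.

Lemma exists_separating_column (i i' : 'I_m) : i' != i ->
  exists j : 'I_n, X0 i j = 0 /\ X0 i' j != 0.
Proof.
move=> neq_i'i.
have [/existsP[j /andP[/eqP Xij0 Xi'j]] | /existsPn no_sep] :=
  boolP [exists j, (X0 i j == 0) && (X0 i' j != 0)]; first by exists j.
suff : delta_mx 0 i' = 0 :> 'rV[R]_m.
  by move/matrixP/(_ 0 i'); rewrite !mxE !eqxx => /eqP; rewrite oner_eq0.
apply: (row_update_eq0 i) => [|j]; first by rewrite mxE eq_sym (negbTE neq_i'i).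
rewrite -rowE mxE inE mxE negbK => /eqP Xij0.
by have := no_sep j; rewrite Xij0 eqxx negbK => /eqP.
Qed.

Lemma card_zeros_row_ge (i : 'I_m) : (m - 1 <= #|~: supp_row X0 i|)%N.
Proof.
set C := ~: supp_row X0 i.
pose A := row_mx (colsub (fun c : 'I_#|C| => enum_val c) X0) (delta_mx i 0 : 'cV[R]_m).
have : row_free A.
  rewrite -kermx_eq0; apply/rowV0P => v /sub_kermxP.
  rewrite mul_mx_row -row_mx0 => /eq_row_mx [vX0 vu0].
  apply: (row_update_eq0 i) => [|j j_zero].
    by move: vu0; rewrite -colE => /matrixP/(_ 0 0); rewrite !mxE.
  have jC : j \in C by rewrite inE.
  move: vX0; rewrite mulmx_colsub => /matrixP/(_ 0 (enum_rank_in jC j)).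
  by rewrite !mxE enum_rankK_in.
by move/eqP=> rankA; rewrite leq_subLR addnC -{1}rankA rank_leq_col.
Qed.

End UniqueFactorization.

Theorem proposition2 (R : realType) (m n : nat) (hm : (0 < m)%N) (hn : (0 < n)%N)
  (D0 : 'M[R]_m) (X0 : 'M[R]_(m, n)) (hD0 : D0 \in unitmx) :
  unique_solution D0 X0 ->
  [/\ (m%:R + (#|supp_mx X0|)%:R / m%:R - 1 <= (n%:R : R)),
      (forall i : 'I_m, (m - 1 <= #|~: supp_row X0 i|)%N) &
      (forall i i' : 'I_m, i' != i ->
         exists j : 'I_n, X0 i j = 0 /\ X0 i' j != 0)].
Proof.
move=> uniq_D0X0.
have zeros_ge := card_zeros_row_ge hD0 uniq_D0X0.
split=> //; last exact: exists_separating_column hD0 uniq_D0X0.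
have := card_supp_mx_le zeros_ge; rewrite -(ler_nat R) natrD !natrM natrB // => card_le.
have m_gt0 : (0 : R) < m%:R by rewrite ltr0n.
by rewrite -(ler_pM2r m_gt0) !mulrDl mulfVK ?gt_eqF //; lra.
Qed.
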